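(* Let $K$ be a field, $m\ge2$, $d_1,\ldots,d_m$ positive integers, $S=K[x_1,\ldots,x_m,y_1,\ldots,y_m]$, and for $1\le i<j\le m$ let $f_{ij}=x_i^{d_i}y_j^{d_j}-x_j^{d_j}y_i^{d_i}$. Let $J_L\subset S$ be the ideal generated by $f_{12},f_{13},\ldots,f_{1m}$. Then $\mathcal{R}=\{f_{12},\ldots,f_{1m}\}\cup\{g_{ij}:=y_1^{d_1}f_{ij}:2\le i<j\le m\}$ is a Gröbner basis of $J_L$ with respect to the lexicographic term order induced by $x_1\succ x_2\succ\cdots\succ x_m\succ y_1\succ\cdots\succ y_m$.
   Context: $J_L$ is the lattice basis ideal of the lattice $L\subset\mathbb{Z}^{2m}$ with $I_L=I_2(D)$, for the basis consisting of the exponent vectors of $f_{12},\ldots,f_{1m}$. *)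

From HB Require Import structures.
From mathcomp Require Import all_boot all_order all_algebra.
From mathcomp Require Import mpoly.
Set Implicit Arguments. Unset Strict Implicit. Unset Printing Implicit Defensive.
Import Order.TTheory GRing.Theory.
Local Open Scope ring_scope.

(* Polynomial ring S = K[x_1..x_m, y_1..y_m] is {mpoly K[m + m]}:
   x_i is the variable lshift m i, y_i the variable rshift m i
   (indices are 0-based: x_1 is x 0, etc.). *)
Section Defs.
Variables (K : fieldType) (m : nat).
Local Notation n := (m + m).

Definition xv (i : 'I_m) : {mpoly K[n]} := 'X_(lshift m i).
Definition yv (i : 'I_m) : {mpoly K[n]} := 'X_(rshift m i).

Definition fij (d : 'I_m -> nat) (i j : 'I_m) : {mpoly K[n]} :=
  xv i ^+ d i * yv j ^+ d j - xv j ^+ d j * yv i ^+ d i.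

Definition JL_gens (d : 'I_m -> nat) : seq {mpoly K[n]} :=
  [seq fij d i j | i <- [seq i <- enum 'I_m | val i == 0%N],
                   j <- [seq j <- enum 'I_m | (0 < val j)%N]].

Definition g_list (d : 'I_m -> nat) : seq {mpoly K[n]} :=
  flatten [seq [seq yv a ^+ d a * fij d p.1 p.2
                 | p <- [seq (b, c) | b <- enum 'I_m, c <- enum 'I_m]
                   & (0 < val p.1)%N && (val p.1 < val p.2)%N]
           | a <- enum 'I_m & val a == 0%N].

Definition R_list (d : 'I_m -> nat) : seq {mpoly K[n]} := JL_gens d ++ g_list d.
End Defs.

Section Groebner.
Variables (K : fieldType) (n : nat).

Definition in_ideal (G : seq {mpoly K[n]}) (f : {mpoly K[n]}) : Prop :=
  exists c : 'I_(size G) -> {mpoly K[n]}, f = \sum_(k < size G) c k * G`_k.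

(* pure lexicographic order on monomials, variable 0 the largest:
   x_1 > ... > x_m > y_1 > ... > y_m *)
Definition lex_lt (u v : 'X_{1..n}) : bool :=
  [exists i : 'I_n, [forall j : 'I_n, (val j < val i)%N ==> (u j == v j)]
                    && (u i < v i)%N].

Definition lex_lead (p : {mpoly K[n]}) (u : 'X_{1..n}) : Prop :=
  u \in msupp p /\ forall v, v \in msupp p -> v != u -> lex_lt v u.

Definition mdivides (u v : 'X_{1..n}) : bool := [forall i : 'I_n, (u i <= v i)%N].

Definition lex_groebner_basis (G : seq {mpoly K[n]}) (I : {mpoly K[n]} -> Prop) : Prop :=
  (forall g, g \in G -> I g) /\
  (forall f, I f -> f != 0 ->
     exists2 g, g \in G & exists u v, [/\ lex_lead g u, lex_lead f v & mdivides u v]).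
End Groebner.

From HB Require Import structures.
From mathcomp Require Import all_boot all_order all_algebra.
From mathcomp Require Import mpoly.
From mathcomp Require Import zify ring.
Set Implicit Arguments. Unset Strict Implicit. Unset Printing Implicit Defensive.
Import Order.TTheory GRing.Theory.

(* Write the exponent of x_i in a monomial as a_i d_i + r_i and that of y_i
   as b_i d_i + s_i.  Each generator f_1j is a binomial, and trading its two
   terms inside a monomial preserves all r_i and s_i, all sums a_i + b_i, the
   total a_1 + ... + a_m, and keeps a_1 + b_1 positive.  Hence, on every fiber
   of these invariants (monomials with a_1 + b_1 = 0 forming singleton fibers),
   the sum of the coefficients of any element of J_L vanishes.  A monomial that
   is divisible by no leading monomial of R is the lex-smallest element of its
   fiber, so it cannot be the leading monomial of an element f of J_L: the
   fiber sum of f would be the leading coefficient of f. *)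

Section LexOrder.
Variable n : nat.
Implicit Types u v w : 'X_{1..n}.

Lemma lex_ltP u v :
  reflect (exists i : 'I_n,
             (forall j : 'I_n, (val j < val i)%N -> u j = v j) /\ (u i < v i)%N)
          (lex_lt u v).
Proof.
apply: (iffP existsP) => [[i /andP[/forallP eq_below lt_i]]|[i [eq_below lt_i]]].
  by exists i; split=> // j ji; move: (eq_below j); rewrite ji => /eqP.
exists i; rewrite lt_i andbT; apply/forallP=> j; apply/implyP=> ji.
by rewrite eq_below.
Qed.

Lemma lex_lt_irr u : ~~ lex_lt u u.
Proof. by apply/negP=> /lex_ltP[i [_]]; rewrite ltnn. Qed.

Lemma lex_lt_trans u v w : lex_lt u v -> lex_lt v w -> lex_lt u w.
Proof.
move=> /lex_ltP[i [eq_i lt_i]] /lex_ltP[j [eq_j lt_j]]; apply/lex_ltP.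
case: (ltngtP (val i) (val j)) => [ij|ji|/val_inj ij].
- exists i; split; last by rewrite -(eq_j _ ij).
  by move=> k ki; rewrite eq_i // eq_j // (ltn_trans ki ij).
- exists j; split; last by rewrite (eq_i _ ji).
  by move=> k kj; rewrite eq_i ?eq_j // (ltn_trans kj ji).
- subst j; exists i; split; first by move=> k ki; rewrite eq_i ?eq_j.
  exact: ltn_trans lt_i lt_j.
Qed.

Lemma lex_lt_asym u v : lex_lt u v -> ~~ lex_lt v u.
Proof.
move=> uv; apply/negP=> /(lex_lt_trans uv).
by rewrite (negbTE (lex_lt_irr u)).
Qed.

Lemma lex_lt_neq u v : lex_lt u v -> u != v.
Proof. by apply: contraTneq => ->; exact: lex_lt_irr. Qed.

Lemma lex_lt_total u v : u != v -> lex_lt u v || lex_lt v u.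
Proof.
move=> uv; have [k0 k0_neq] : exists k : 'I_n, u k != v k.
  apply/existsP; apply: contraNT uv; rewrite negb_exists => /forallP eq_uv.
  by apply/eqP/mnmP=> k; apply/eqP; rewrite -[_ == _]negbK.
case: (@arg_minnP _ k0 (fun k => u k != v k) val k0_neq) => i i_neq i_min.
have eq_below j : (val j < val i)%N -> u j = v j.
  by move=> ji; apply/eqP; apply: contraTT ji => /i_min; rewrite -leqNgt.
case: (ltngtP (u i) (v i)) => [lt|lt|eq]; last by rewrite eq eqxx in i_neq.
- by rewrite (introT (lex_ltP _ _)) //; exists i.
- by rewrite (introT (lex_ltP v u)) ?orbT //; exists i; split=> // j /eq_below.
Qed.

Lemma exists_lex_max (s : seq 'X_{1..n}) : s != [::] ->
  exists2 v, v \in s & forall w, w \in s -> w != v -> lex_lt w v.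
Proof.
elim: s => // a s IHs _; have [->|s_nil] := eqVneq s [::].
  by exists a; rewrite ?mem_head // => w; rewrite inE => ->.
have [v vs v_max] := IHs s_nil.
have [->|av] := eqVneq a v.
  exists v; rewrite ?mem_head // => w; rewrite inE => /orP[/eqP->|]; last exact: v_max.
  by rewrite eqxx.
case/orP: (lex_lt_total av) => [lt_av|lt_va].
  exists v; rewrite ?inE ?vs ?orbT // => w; rewrite inE => /orP[/eqP-> _|]//.
  exact: v_max.
exists a; rewrite ?mem_head // => w; rewrite inE => /orP[/eqP->|ws]; first by rewrite eqxx.
move=> _; have [->|wv] := eqVneq w v; first exact: lt_va.
exact: lex_lt_trans (v_max _ ws wv) lt_va.
Qed.
End LexOrder.

Local Open Scope ring_scope.

Section Polynomials.
Variables (K : fieldType) (n : nat).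
Implicit Types (G : seq {mpoly K[n]}) (p q : {mpoly K[n]}) (A B : 'X_{1..n}).

Lemma lex_lead_exists p : p != 0 -> exists v, lex_lead p v.
Proof.
rewrite -msupp_eq0 => supp_neq0; have [v v_supp v_max] := exists_lex_max supp_neq0.
by exists v.
Qed.

Lemma lex_lead_binomial A B : lex_lt B A -> lex_lead ('X_[A] - 'X_[B] : {mpoly K[n]}) A.
Proof.
move=> BA; have /negbTE BA_neq := lex_lt_neq BA.
split; first by rewrite mcoeff_msupp mcoeffB !mcoeffX eqxx BA_neq subr0 oner_eq0.
move=> v; rewrite mcoeff_msupp mcoeffB !mcoeffX => v_supp vA.
rewrite [A == v]eq_sym (negbTE vA) sub0r oppr_eq0 in v_supp.
by have [<-//|/negbTE Bv] := eqVneq B v; rewrite Bv eqxx in v_supp.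
Qed.

Lemma in_ideal_mem G g : g \in G -> in_ideal G g.
Proof.
move=> gG; have g_idx : (index g G < size G)%N by rewrite index_mem.
exists (fun k => (val k == index g G)%:R).
rewrite (bigD1 (Ordinal g_idx)) //= eqxx mul1r nth_index // big1 ?addr0 //.
by move=> k k_neq; rewrite -val_eqE /= in k_neq; rewrite (negbTE k_neq) mul0r.
Qed.

Lemma in_idealD G p q : in_ideal G p -> in_ideal G q -> in_ideal G (p + q).
Proof.
move=> [c ->] [c' ->]; exists (fun k => c k + c' k).
by rewrite -big_split; apply: eq_bigr => k _; rewrite mulrDl.
Qed.

Lemma in_idealN G p : in_ideal G p -> in_ideal G (- p).
Proof.
move=> [c ->]; exists (fun k => - c k).
by rewrite -sumrN; apply: eq_bigr => k _; rewrite mulNr.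
Qed.

Lemma in_idealM G a p : in_ideal G p -> in_ideal G (a * p).
Proof.
move=> [c ->]; exists (fun k => a * c k).
by rewrite mulr_sumr; apply: eq_bigr => k _; rewrite mulrA.
Qed.

Variable F : 'X_{1..n} -> K.

Definition wsum p := \sum_(w <- msupp p) F w * p@_w.

Lemma wsumE p (s : seq 'X_{1..n}) : uniq s -> {subset msupp p <= s} ->
  wsum p = \sum_(w <- s) F w * p@_w.
Proof.
move=> s_uniq supp_s.
rewrite [RHS](bigID (mem (msupp p))) /= [X in _ + X]big1 ?addr0; last first.
  by move=> w /memN_msupp_eq0 ->; rewrite mulr0.
rewrite -big_filter; apply/perm_big/uniq_perm; [exact: msupp_uniq | exact: filter_uniq |].
by move=> w; rewrite mem_filter; case: (boolP (w \in msupp p)) => // /supp_s ->.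
Qed.

Lemma wsumD p q : wsum (p + q) = wsum p + wsum q.
Proof.
pose s := undup (msupp p ++ msupp q).
have s_uniq : uniq s := undup_uniq _.
have sub_s r : {subset msupp r <= msupp p ++ msupp q} -> {subset msupp r <= s}.
  by move=> sub w /sub; rewrite mem_undup.
have p_s : {subset msupp p <= s} by apply: sub_s => w wp; rewrite mem_cat wp.
have q_s : {subset msupp q <= s} by apply: sub_s => w wq; rewrite mem_cat wq orbT.
have pq_s : {subset msupp (p + q) <= s} by exact/sub_s/msuppD_le.
rewrite (wsumE s_uniq pq_s) (wsumE s_uniq p_s) (wsumE s_uniq q_s) -big_split.
by apply: eq_bigr => w _; rewrite mcoeffD mulrDr.
Qed.

Lemma wsumZ c p : wsum (c *: p) = c * wsum p.
Proof.
rewrite (@wsumE (c *: p) (msupp p)) ?msupp_uniq //; last exact: msuppZ_le.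
by rewrite /wsum mulr_sumr; apply: eq_bigr => w _; rewrite mcoeffZ mulrCA.
Qed.

Lemma wsumB p q : wsum (p - q) = wsum p - wsum q.
Proof. by rewrite wsumD -scaleN1r wsumZ mulN1r. Qed.

Lemma wsum_sum (I : Type) (r : seq I) (P : pred I) (f : I -> {mpoly K[n]}) :
  wsum (\sum_(i <- r | P i) f i) = \sum_(i <- r | P i) wsum (f i).
Proof. by apply: (big_morph wsum wsumD); rewrite /wsum msupp0 big_nil. Qed.

Lemma wsumX u : wsum 'X_[u] = F u.
Proof. by rewrite /wsum msuppX big_seq1 mcoeffX eqxx mulr1. Qed.

Lemma wsum_mul_binomial c A B : (forall u, F (u + A)%MM = F (u + B)%MM) ->
  wsum (c * ('X_[A] - 'X_[B])) = 0.
Proof.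
move=> FAB; rewrite {1}[c]mpolyE mulr_suml wsum_sum big1 // => u _.
by rewrite -scalerAl wsumZ mulrBr -!mpolyXD wsumB !wsumX FAB subrr mulr0.
Qed.
End Polynomials.

Close Scope ring_scope.

Lemma exists_ltn_of_sum_eq (I : finType) (F G : I -> nat) (i : I) :
  \sum_k F k = \sum_k G k -> G i < F i -> exists j, F j < G j.
Proof.
move=> sum_eq Gi_lt; apply/existsP/contraT; rewrite negb_exists => /forallP F_ge.
have : \sum_k G k < \sum_k F k.
  rewrite (bigD1 i) //= [X in _ < X](bigD1 i) //= -addSn leq_add //.
  by apply: leq_sum => k _; rewrite leqNgt F_ge.
by rewrite sum_eq ltnn.
Qed.

Section Fibers.
Variables (m : nat) (d : 'I_m -> nat) (i0 : 'I_m).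
Hypotheses (d_gt0 : forall i, 0 < d i) (i0_val : val i0 = 0).
Local Notation n := (m + m).
Implicit Types (u v w : 'X_{1..n}) (i j a b : 'I_m).

Definition xdeg w i := w (lshift m i).
Definition ydeg w i := w (rshift m i).
Definition xquo w i := xdeg w i %/ d i.
Definition yquo w i := ydeg w i %/ d i.

Definition xyexp a b : 'X_{1..n} :=
  [multinom (if k == lshift m a then d a else 0) +
            (if k == rshift m b then d b else 0) | k < n].

Definition y0exp : 'X_{1..n} :=
  [multinom if k == rshift m i0 then d i0 else 0 | k < n].

(* Monomials with a_1 + b_1 = 0 are moved by no generator, so each of them
   gets a fiber of its own. *)
Definition fiber_key w :=
  (if xquo w i0 + yquo w i0 == 0 then Some w else None,
   [ffun i => xdeg w i %% d i], [ffun i => ydeg w i %% d i],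
   [ffun i => xquo w i + yquo w i], \sum_i xquo w i).

(* Divisibility by the leading monomial of some f_1j or some g_ij. *)
Definition lead_reducible w :=
  [exists j, [&& 0 < val j, d i0 <= xdeg w i0 & d j <= ydeg w j]] ||
  [exists i, exists j,
     [&& 0 < val i, val i < val j, d i0 <= ydeg w i0, d i <= xdeg w i
       & d j <= ydeg w j]].

Lemma xdegD u v i : xdeg (u + v)%MM i = xdeg u i + xdeg v i.
Proof. exact: mnmDE. Qed.

Lemma ydegD u v i : ydeg (u + v)%MM i = ydeg u i + ydeg v i.
Proof. exact: mnmDE. Qed.

Lemma xdeg_xyexp a b i : xdeg (xyexp a b) i = if i == a then d a else 0.
Proof. by rewrite /xdeg mnmE !eq_shift addn0. Qed.

Lemma ydeg_xyexp a b i : ydeg (xyexp a b) i = if i == b then d b else 0.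
Proof. by rewrite /ydeg mnmE !eq_shift. Qed.

Lemma xdeg_divn w i : xdeg w i = xquo w i * d i + xdeg w i %% d i.
Proof. exact: divn_eq. Qed.

Lemma ydeg_divn w i : ydeg w i = yquo w i * d i + ydeg w i %% d i.
Proof. exact: divn_eq. Qed.

Lemma xquo_add_xyexp w a b i : xquo (w + xyexp a b)%MM i = xquo w i + (i == a).
Proof.
rewrite /xquo xdegD xdeg_xyexp; have [->|_] := eqVneq i a; last by rewrite !addn0.
by rewrite divnDr ?dvdnn // divnn d_gt0.
Qed.

Lemma yquo_add_xyexp w a b i : yquo (w + xyexp a b)%MM i = yquo w i + (i == b).
Proof.
rewrite /yquo ydegD ydeg_xyexp; have [->|_] := eqVneq i b; last by rewrite !addn0.
by rewrite divnDr ?dvdnn // divnn d_gt0.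
Qed.

Lemma xrem_add_xyexp w a b i :
  xdeg (w + xyexp a b)%MM i %% d i = xdeg w i %% d i.
Proof. by rewrite xdegD xdeg_xyexp; case: eqP => [->|_]; rewrite ?modnDr ?addn0. Qed.

Lemma yrem_add_xyexp w a b i :
  ydeg (w + xyexp a b)%MM i %% d i = ydeg w i %% d i.
Proof. by rewrite ydegD ydeg_xyexp; case: eqP => [->|_]; rewrite ?modnDr ?addn0. Qed.

Lemma fiber_key_swap w j :
  fiber_key (w + xyexp i0 j)%MM = fiber_key (w + xyexp j i0)%MM.
Proof.
have quo0_neq0 a b : (a == i0) || (b == i0) ->
    (xquo (w + xyexp a b)%MM i0 + yquo (w + xyexp a b)%MM i0 == 0) = false.
  rewrite xquo_add_xyexp yquo_add_xyexp; by case/orP => /eqP->; rewrite [i0 == i0]eqxx; lia.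
have sum_quo a b : \sum_i xquo (w + xyexp a b)%MM i = \sum_i xquo w i + 1.
  under eq_bigr do rewrite xquo_add_xyexp.
  rewrite big_split /=; congr (_ + _).
  by rewrite (bigD1 a) //= eqxx big1 ?addn0 // => i /negbTE ->.
rewrite /fiber_key !quo0_neq0 ?eqxx ?orbT // !sum_quo.
congr (_, _, _, _, _); apply/ffunP => i; rewrite !ffunE.
- by rewrite !xrem_add_xyexp.
- by rewrite !yrem_add_xyexp.
- by rewrite !xquo_add_xyexp !yquo_add_xyexp; lia.
Qed.

Lemma lead_reducible_of_quo w i j : val i < val j ->
  0 < xquo w i -> 0 < yquo w j -> 0 < xquo w i0 + yquo w i0 -> lead_reducible w.
Proof.
rewrite !divn_gt0 // => ij xi yj quo0; apply/orP.
have [i_0|i_gt0] := posnP (val i).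
  have ii0 : i = i0 by apply/val_inj; rewrite i_0 i0_val.
  subst i.
  by left; apply/existsP; exists j; rewrite -i0_val ij xi yj.
have [y0_0|y0_gt0] := posnP (yquo w i0).
  left; apply/existsP; exists j; rewrite (ltn_trans i_gt0 ij) yj andbT.
  by rewrite -divn_gt0 // -/(xquo w i0); rewrite y0_0 addn0 in quo0.
right; apply/existsP; exists i; apply/existsP; exists j.
by rewrite i_gt0 ij xi yj !andbT -divn_gt0.
Qed.

Lemma fiber_key_quo_inj w w' :
  fiber_key w = fiber_key w' -> (forall i, xquo w i = xquo w' i) -> w = w'.
Proof.
case=> _ /ffunP xrem /ffunP yrem /ffunP quo_sum _ xquo_eq.
apply/mnmP => t; case: (split_ordP t) => k ->.
  rewrite -[w _]/(xdeg w k) -[w' _]/(xdeg w' k) [xdeg w k]xdeg_divn [xdeg w' k]xdeg_divn.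
  by have := xrem k; rewrite !ffunE xquo_eq => ->.
have yquo_eq : yquo w k = yquo w' k.
  by have := quo_sum k; rewrite !ffunE xquo_eq => /addnI.
rewrite -[w _]/(ydeg w k) -[w' _]/(ydeg w' k) [ydeg w k]ydeg_divn [ydeg w' k]ydeg_divn.
by have := yrem k; rewrite !ffunE yquo_eq => ->.
Qed.

Lemma lex_lt_of_xquo w w' i :
  (forall k, xdeg w k %% d k = xdeg w' k %% d k) ->
  (forall k, val k < val i -> xquo w k = xquo w' k) -> xquo w i < xquo w' i ->
  lex_lt w w'.
Proof.
move=> xrem quo_below quo_i; apply/lex_ltP; exists (lshift m i); split.
  move=> t ti; have tm : val t < m := ltn_trans ti (ltn_ord i).
  have -> : t = lshift m (Ordinal tm) by apply/val_inj.
  rewrite -[w _]/(xdeg w _) -[w' _]/(xdeg w' _) [xdeg w _]xdeg_divn.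
  by rewrite [xdeg w' _]xdeg_divn xrem quo_below.
rewrite -[w _]/(xdeg w _) -[w' _]/(xdeg w' _) [xdeg w _]xdeg_divn.
by rewrite [xdeg w' _]xdeg_divn xrem ltn_add2r ltn_pmul2r.
Qed.

Lemma fiber_key_lex_min w0 w : ~~ lead_reducible w0 ->
  fiber_key w = fiber_key w0 -> w != w0 -> lex_lt w0 w.
Proof.
move=> irr0 key_eq w_neq; have [quo0 xrem _ quo_sum sum_eq] := key_eq.
have {}quo_sum k : xquo w k + yquo w k = xquo w0 k + yquo w0 k.
  by move/ffunP: quo_sum => /(_ k); rewrite !ffunE.
have quo0_gt0 : 0 < xquo w0 i0 + yquo w0 i0.
  rewrite lt0n; apply: contra w_neq => /eqP quo0_0.
  by move: quo0; rewrite quo_sum quo0_0 eqxx => -[->].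
have [k0 k0_neq] : exists k, xquo w k != xquo w0 k.
  apply/existsP; apply: contraNT w_neq; rewrite negb_exists => /forallP quo_eq.
  by apply/eqP/(fiber_key_quo_inj key_eq) => k; apply/eqP; rewrite -[_ == _]negbK.
case: (@arg_minnP _ k0 (fun k => xquo w k != xquo w0 k) val k0_neq) => i i_neq i_min.
have quo_below k : val k < val i -> xquo w0 k = xquo w k.
  by move=> ki; apply/esym/eqP; apply: contraTT ki => /i_min; rewrite -leqNgt.
apply: (lex_lt_of_xquo _ quo_below).
  by move=> k; move/ffunP: xrem => /(_ k); rewrite !ffunE.
rewrite ltn_neqAle eq_sym i_neq leqNgt; apply: contra irr0 => quo_i.
have [j quo_j] := exists_ltn_of_sum_eq (esym sum_eq) quo_i.
have ij : val i < val j.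
  case: (ltngtP (val i) (val j)) => // [ji|/val_inj ij].
    by rewrite quo_below // ltnn in quo_j.
  by move: quo_i quo_j; rewrite ij; lia.
apply: (lead_reducible_of_quo ij) => //; first exact: leq_ltn_trans quo_i.
by move: (quo_sum j) quo_j; lia.
Qed.

Lemma y0exp_xdeg i : xdeg y0exp i = 0.
Proof. by rewrite /xdeg mnmE eq_shift. Qed.

Lemma y0exp_ydeg i : ydeg y0exp i = if i == i0 then d i0 else 0.
Proof. by rewrite /ydeg mnmE eq_shift. Qed.

Lemma lex_lt_xyexp_swap j : j != i0 -> lex_lt (xyexp j i0) (xyexp i0 j).
Proof.
move=> j_neq; apply/lex_ltP; exists (lshift m i0); split.
  by move=> t; rewrite /= i0_val.
change (xdeg (xyexp j i0) i0 < xdeg (xyexp i0 j) i0).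
by rewrite !xdeg_xyexp eqxx eq_sym (negbTE j_neq).
Qed.

Lemma lex_lt_y0exp_xyexp_swap i j : val i < val j ->
  lex_lt (y0exp + xyexp j i)%MM (y0exp + xyexp i j)%MM.
Proof.
move=> ij; have /negbTE i_neq_j : i != j by apply: contraTneq ij => ->; rewrite ltnn.
apply/lex_ltP; exists (lshift m i); split; last first.
  change (xdeg (y0exp + xyexp j i)%MM i < xdeg (y0exp + xyexp i j)%MM i).
  by rewrite !xdegD y0exp_xdeg !xdeg_xyexp eqxx i_neq_j !add0n d_gt0.
move=> t ti; have tm : val t < m := ltn_trans ti (ltn_ord i).
have -> : t = lshift m (Ordinal tm) by apply/val_inj.
change (xdeg (y0exp + xyexp j i)%MM (Ordinal tm) = xdeg (y0exp + xyexp i j)%MM (Ordinal tm)).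
rewrite !xdegD !xdeg_xyexp.
by rewrite -!val_eqE /= !ltn_eqF // (ltn_trans ti ij).
Qed.

Lemma mdivides_xyexp w j : d i0 <= xdeg w i0 -> d j <= ydeg w j ->
  mdivides (xyexp i0 j) w.
Proof.
move=> x0 yj; apply/forallP => t; case: (split_ordP t) => k ->.
  by rewrite -[xyexp _ _ _]/(xdeg _ k) xdeg_xyexp; case: eqP => [->|].
by rewrite -[xyexp _ _ _]/(ydeg _ k) ydeg_xyexp; case: eqP => [->|].
Qed.

Lemma mdivides_y0exp_xyexp w i j : val i < val j ->
  d i0 <= ydeg w i0 -> d i <= xdeg w i -> d j <= ydeg w j ->
  mdivides (y0exp + xyexp i j)%MM w.
Proof.
move=> ij y0 xi yj; have /negbTE i0_neq_j : i0 != j.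
  by apply: contraTneq ij => <-; rewrite i0_val.
apply/forallP => t; case: (split_ordP t) => k ->; rewrite mnmDE.
  rewrite -[y0exp _]/(xdeg _ k) -[xyexp _ _ _]/(xdeg _ k) y0exp_xdeg xdeg_xyexp.
  by case: eqP => [->|].
rewrite -[y0exp _]/(ydeg _ k) -[xyexp _ _ _]/(ydeg _ k) y0exp_ydeg ydeg_xyexp.
by have [->|_] := eqVneq k i0; [rewrite i0_neq_j addn0 | case: eqP => [->|]].
Qed.
End Fibers.

Local Open Scope ring_scope.

Section GroebnerBasis.
Variables (K : fieldType) (m : nat) (d : 'I_m -> nat).
Hypothesis d_gt0 : forall i, (0 < d i)%N.
Local Notation n := (m + m).
Local Notation xyexp := (xyexp d).
Implicit Types (i j a b : 'I_m) (f : {mpoly K[n]}).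

Lemma fijE a b : fij K d a b = 'X_[xyexp a b] - 'X_[xyexp b a].
Proof.
rewrite /fij /xv /yv !mpolyXn -!mpolyXD; congr ('X_[_] - 'X_[_]);
  apply/mnmP => k; rewrite mnmDE !mulmnE !mnm1E mnmE ![_ == k]eq_sym;
  by do 2 case: (_ == _); rewrite ?mul1n ?mul0n.
Qed.

Lemma gijE i0 a b : yv K i0 ^+ d i0 * fij K d a b =
  'X_[y0exp d i0 + xyexp a b] - 'X_[y0exp d i0 + xyexp b a].
Proof.
rewrite fijE mulrBr !mpolyXD /yv mpolyXn; congr ('X_[_] * _ - 'X_[_] * _);
  apply/mnmP => k; rewrite mulmnE mnm1E mnmE eq_sym;
  by case: (_ == _); rewrite ?mul1n ?mul0n.
Qed.

Lemma fij_in_JL_gens a b : val a = 0%N -> (0 < val b)%N -> fij K d a b \in JL_gens K d.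
Proof.
by move=> a0 b_gt0; apply: allpairs_f; rewrite mem_filter mem_enum ?a0 ?b_gt0.
Qed.

Lemma JL_gensP g : g \in JL_gens K d ->
  exists a b, [/\ val a = 0%N, b != a & g = fij K d a b].
Proof.
case/allpairsP => [[a b] /= [+ + ->]]; rewrite !mem_filter => /andP[/eqP a0 _] /andP[b_gt0 _].
by exists a, b; split=> //; apply: contraTneq b_gt0 => ->; rewrite a0.
Qed.

Lemma gij_in_g_list i0 i j : val i0 = 0%N -> (0 < val i)%N -> (val i < val j)%N ->
  yv K i0 ^+ d i0 * fij K d i j \in g_list K d.
Proof.
move=> i0_val i_gt0 ij; rewrite /g_list; apply/flattenP.
have i0_in : i0 \in [seq a <- enum 'I_m | val a == 0%N] by rewrite mem_filter mem_enum i0_val.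
eexists; first exact: (map_f _ i0_in).
apply: (map_f (fun p : 'I_m * 'I_m => yv K i0 ^+ d i0 * fij K d p.1 p.2) (x := (i, j))).
by rewrite mem_filter /= i_gt0 ij; apply: (allpairs_f pair); rewrite mem_enum.
Qed.

Lemma R_list_in_ideal g : g \in R_list K d -> in_ideal (JL_gens K d) g.
Proof.
rewrite mem_cat => /orP[]; first exact: in_ideal_mem.
case/flattenP => s /mapP[a]; rewrite mem_filter => /andP[/eqP a0 _] ->.
case/mapP => [[b c]]; rewrite mem_filter /= => /andP[/andP[b_gt0 bc] _] ->.
have -> : yv K a ^+ d a * fij K d b c =
    yv K b ^+ d b * fij K d a c - yv K c ^+ d c * fij K d a b by rewrite /fij; ring.
apply/in_idealD/in_idealN; apply/in_idealM/in_ideal_mem/fij_in_JL_gens => //.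
exact: ltn_trans bc.
Qed.

Section FixedFirstIndex.
Variable i0 : 'I_m.
Hypothesis i0_val : val i0 = 0%N.
Local Notation fiber_key := (fiber_key d i0).
Local Notation lead_reducible := (lead_reducible d i0).

Lemma wsum_fiber_in_ideal v f : in_ideal (JL_gens K d) f ->
  wsum (fun w => ((fiber_key w == fiber_key v)%:R : K)) f = 0.
Proof.
case=> c ->; rewrite wsum_sum big1 // => k _.
have [a [b [a0 _ ->]]] := JL_gensP (mem_nth 0 (ltn_ord k)).
have -> : a = i0 by apply/val_inj; rewrite a0 i0_val.
by rewrite fijE; apply: wsum_mul_binomial => u; rewrite fiber_key_swap.
Qed.

Lemma lead_reducible_of_in_ideal f v : in_ideal (JL_gens K d) f ->
  lex_lead f v -> lead_reducible v.
Proof.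
move=> f_in [v_supp v_max]; apply/contraT => irr.
have := wsum_fiber_in_ideal v f_in.
rewrite /wsum (bigD1_seq v) ?msupp_uniq //= eqxx mul1r big_seq_cond big1 ?addr0.
  by move/eqP; rewrite mcoeff_eq0 v_supp.
move=> w /andP[w_supp w_neq]; case: eqP => [key_eq|_]; last by rewrite mul0r.
have := fiber_key_lex_min d_gt0 i0_val irr key_eq w_neq.
by move/lex_lt_asym; rewrite v_max.
Qed.

Lemma lead_reducible_R_lead v : lead_reducible v ->
  exists2 g, g \in R_list K d & exists u, lex_lead g u /\ mdivides u v.
Proof.
case/orP => [/existsP[j /and3P[j_gt0 x0 yj]]|].
  have j_neq : j != i0 by apply: contraTneq j_gt0 => ->; rewrite i0_val.
  exists (fij K d i0 j); first by rewrite mem_cat fij_in_JL_gens.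
  exists (xyexp i0 j); rewrite fijE.
  by split; [apply/lex_lead_binomial/lex_lt_xyexp_swap | apply: mdivides_xyexp].
case/existsP => i /existsP[j /and5P[i_gt0 ij y0 xi yj]].
exists (yv K i0 ^+ d i0 * fij K d i j); first by rewrite mem_cat gij_in_g_list ?orbT.
exists (y0exp d i0 + xyexp i j)%MM; rewrite gijE.
by split; [apply/lex_lead_binomial/lex_lt_y0exp_xyexp_swap | apply: mdivides_y0exp_xyexp].
Qed.
End FixedFirstIndex.
End GroebnerBasis.

Unset Implicit Arguments.
Theorem lemma4p12 (K : fieldType) (m : nat) (hm : (2 <= m)%N)
    (d : 'I_m -> nat) (hd : forall i, (0 < d i)%N) :
  lex_groebner_basis (R_list K d) (in_ideal (JL_gens K d)).
Proof.
split; first exact: R_list_in_ideal.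
move=> f f_in f_neq0; have [v lead_v] := lex_lead_exists f_neq0.
have m_gt0 : (0 < m)%N by apply: leq_trans hm.
pose i0 := Ordinal m_gt0.
have red_v := lead_reducible_of_in_ideal hd (i0 := i0) erefl f_in lead_v.
have [g g_in [u [lead_g div_uv]]] := lead_reducible_R_lead K hd (i0 := i0) erefl red_v.
by exists g => //; exists u, v.
Qed.
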